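(* Let $d>0$, $\alpha\in\mathbb R$, $p\in C^1([a,b])$, and let $(\lambda_1,\Phi_1)$ be the principal eigenpair of $$(d\Phi_x-\alpha\Phi)_x+(p(x)+\lambda)\Phi=0,\ a<x<b;\qquad d\Phi_x-\alpha\Phi=0\ \text{at }x=a,b,$$ with $\Phi_1>0$ on $[a,b]$. Then: (a) if $p_x\le0$ on $[a,b]$ and $p_x\not\equiv0$, then $d\,(\Phi_1)_x<\alpha\Phi_1$ in $(a,b)$; (b) if $p_x\ge0$ on $[a,b]$ and $p_x\not\equiv0$, then $d\,(\Phi_1)_x>\alpha\Phi_1$ in $(a,b)$.
   Context: The principal eigenvalue $\lambda_1$ is the smallest eigenvalue; it is simple and its eigenfunction can be chosen strictly positive. *)

From Stdlib Require Import Reals.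
From Coquelicot Require Import Coquelicot.
Open Scope R_scope.

Definition deriv_on (a b : R) (f f' : R -> R) : Prop :=
  forall x, a <= x <= b ->
    filterlim (fun y => (f y - f x) / (y - x))
      (within (fun y => a <= y <= b /\ y <> x) (locally x)) (locally (f' x)).

Definition cont_on (a b : R) (f : R -> R) : Prop :=
  forall x, a <= x <= b ->
    filterlim f (within (fun y => a <= y <= b) (locally x)) (locally (f x)).

Definition C1_on (a b : R) (p p' : R -> R) : Prop :=
  deriv_on a b p p' /\ cont_on a b p'.

Definition eigenpair (d alpha : R) (p : R -> R) (a b : R)
    (lam : R) (Phi : R -> R) : Prop :=
  exists Phi' Phi'' : R -> R,
    deriv_on a b Phi Phi' /\ deriv_on a b Phi' Phi'' /\ cont_on a b Phi'' /\
    (forall x, a < x < b ->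
        d * Phi'' x - alpha * Phi' x + (p x + lam) * Phi x = 0) /\
    d * Phi' a - alpha * Phi a = 0 /\
    d * Phi' b - alpha * Phi b = 0 /\
    (exists x, a <= x <= b /\ Phi x <> 0).

Definition principal_eigenpair (d alpha : R) (p : R -> R) (a b : R)
    (lam1 : R) (Phi1 : R -> R) : Prop :=
  eigenpair d alpha p a b lam1 Phi1 /\
  (forall lam Phi, eigenpair d alpha p a b lam Phi -> lam1 <= lam) /\
  (forall x, a <= x <= b -> 0 < Phi1 x).

From Stdlib Require Import Reals Lra.
From Coquelicot Require Import Coquelicot.
Open Scope R_scope.

(* Let [w = d Phi' - alpha Phi] be the flux of the eigenfunction; it vanishes at [a] and [b],
   so the claim is about the sign of [z = w / Phi] on [(a, b)].  By the equation,
   [z' = exp (alpha x / d) K / Phi^2] with [K = exp (- alpha x / d) (Phi w' - Phi' w)], and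
   [K' = - exp (- alpha x / d) p' Phi^2].  If [p' <= 0] then [K] is nondecreasing, so [z]
   first decreases and then increases; since [z a = z b = 0] this forces [z <= 0], and an
   interior zero of [z] would give [z = 0], hence [K = 0], on all of [(a, b)], against
   [p' <> 0].  The case [p' >= 0] is the same argument for [- z]. *)

Lemma within_locally_eps (P : R -> Prop) (g : R -> R) x l :
  filterlim g (within P (locally x)) (locally l) ->
  forall eps, 0 < eps -> exists del, 0 < del /\
    forall y, P y -> Rabs (y - x) < del -> Rabs (g y - l) < eps.
Proof.
  intros H eps Heps.
  destruct (proj1 (filterlim_locally g l) H (mkposreal eps Heps)) as [del Hdel].
  exists del; split; [apply cond_pos|].
  intros y Py Hy; exact (Hdel y Hy Py).
Qed.

Lemma locally_open_interval a b t : a < t < b -> locally t (fun y => a < y < b).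
Proof. intros Ht; exact (open_and _ _ (open_gt a) (open_lt b) t Ht). Qed.

Lemma deriv_on_is_derive a b f f' x :
  deriv_on a b f f' -> a < x < b -> is_derive f x (f' x).
Proof.
  intros Hf Hx. apply is_derive_Reals. intros eps Heps.
  destruct (within_locally_eps _ _ _ _ (Hf x ltac:(lra)) eps Heps) as [del [Hdel Hq]].
  assert (Hr : 0 < Rmin del (Rmin (x - a) (b - x))) by (repeat apply Rmin_pos; lra).
  exists (mkposreal _ Hr). intros h Hh Hhr. simpl in Hhr.
  pose proof (Rmin_l del (Rmin (x - a) (b - x))).
  pose proof (Rmin_r del (Rmin (x - a) (b - x))).
  pose proof (Rmin_l (x - a) (b - x)). pose proof (Rmin_r (x - a) (b - x)).
  pose proof (Rle_abs h). pose proof (Rle_abs (- h)). rewrite Rabs_Ropp in *.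
  specialize (Hq (x + h)). replace (x + h - x) with h in Hq by ring.
  apply Hq; [split; [lra|] | lra].
  intros E; apply Hh; lra.
Qed.

Lemma deriv_on_cont_on a b f f' : deriv_on a b f f' -> cont_on a b f.
Proof.
  intros Hf x Hx. apply filterlim_locally. intros eps.
  destruct (within_locally_eps _ _ _ _ (Hf x Hx) 1 Rlt_0_1) as [del [Hdel Hq]].
  set (M := 1 + Rabs (f' x)).
  assert (HM : 0 < M) by (unfold M; pose proof (Rabs_pos (f' x)); lra).
  assert (Hr : 0 < Rmin del (eps / M)).
  { apply Rmin_pos; [lra|apply Rdiv_lt_0_compat; [apply cond_pos|lra]]. }
  exists (mkposreal _ Hr). intros y Hyx Hy. simpl in Hyx.
  change (Rabs (y - x) < Rmin del (eps / M)) in Hyx.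
  change (Rabs (f y - f x) < eps).
  pose proof (Rmin_l del (eps / M)). pose proof (Rmin_r del (eps / M)).
  destruct (Req_dec y x) as [->|Hne].
  { rewrite Rminus_diag, Rabs_R0. apply cond_pos. }
  specialize (Hq y (conj Hy Hne) ltac:(lra)).
  set (q := (f y - f x) / (y - x)) in Hq.
  replace (f y - f x) with (q * (y - x)) by (unfold q; field; lra).
  rewrite Rabs_mult.
  assert (Hqb : Rabs q <= M).
  { unfold M. pose proof (Rabs_triang (q - f' x) (f' x)).
    replace (q - f' x + f' x) with q in * by ring. lra. }
  apply Rle_lt_trans with (M * Rabs (y - x)).
  { apply Rmult_le_compat_r; [apply Rabs_pos|exact Hqb]. }
  replace (pos eps) with (M * (eps / M)) by (field; lra).
  apply Rmult_lt_compat_l; lra.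
Qed.

(* The mean value theorem of the standard library asks for two-sided continuity at the
   endpoints; composing with [clamp a b] turns continuity on [[a, b]] into continuity on [R]. *)
Definition clamp (a b t : R) : R := Rmax a (Rmin b t).

Lemma clamp_in a b t : a <= b -> a <= clamp a b t <= b.
Proof. intros. unfold clamp, Rmax, Rmin; repeat destruct Rle_dec; lra. Qed.

Lemma clamp_id a b t : a <= t <= b -> clamp a b t = t.
Proof. intros. unfold clamp, Rmax, Rmin; repeat destruct Rle_dec; lra. Qed.

Lemma clamp_1lipschitz a b y t : a <= b -> Rabs (clamp a b y - clamp a b t) <= Rabs (y - t).
Proof.
  intros. unfold clamp, Rmax, Rmin; repeat destruct Rle_dec;
  unfold Rabs; repeat destruct Rcase_abs; lra.
Qed.

Lemma continuity_pt_clamp a b f t :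
  a <= b -> cont_on a b f -> continuity_pt (fun y => f (clamp a b y)) t.
Proof.
  intros Hab Hf eps Heps.
  destruct (within_locally_eps _ _ _ _ (Hf _ (clamp_in a b t Hab)) eps Heps) as [del [Hdel Hd]].
  exists del; split; [exact Hdel|].
  intros y [_ Hy]. simpl in *. unfold R_dist in *.
  apply Hd; [apply clamp_in; exact Hab|].
  eapply Rle_lt_trans; [apply clamp_1lipschitz; exact Hab|exact Hy].
Qed.

Lemma is_derive_clamp a b (f : R -> R) t l :
  a < t < b -> is_derive f t l -> is_derive (fun y => f (clamp a b y)) t l.
Proof.
  intros Ht Hf. apply (is_derive_ext_loc f); [|exact Hf].
  apply (filter_imp (fun y => a < y < b)); [|exact (locally_open_interval a b t Ht)].
  intros y Hy. rewrite clamp_id; [reflexivity|lra].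
Qed.

Lemma cont_on_nonzero_interior a b g :
  a < b -> cont_on a b g -> (exists x, a <= x <= b /\ g x <> 0) ->
  exists x, a < x < b /\ g x <> 0.
Proof.
  intros Hab Hg [t [Ht Hgt]].
  destruct (within_locally_eps _ _ _ _ (Hg t Ht) (Rabs (g t)) (Rabs_pos_lt _ Hgt))
    as [del [Hdel Hd]].
  set (s := Rmin (1/2) (del / (b - a))).
  assert (Hs1 : s <= 1/2) by apply Rmin_l.
  assert (Hs2 : s <= del / (b - a)) by apply Rmin_r.
  assert (Hs : 0 < s) by (apply Rmin_pos; [lra|apply Rdiv_lt_0_compat; lra]).
  set (y := t + s * ((a + b) / 2 - t)).
  assert (Hy : a < y < b) by (unfold y; split; nra).
  exists y; split; [exact Hy|]. intros Hgy.
  assert (Hyt : Rabs (y - t) < del).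
  { unfold y. replace (t + s * ((a + b) / 2 - t) - t) with (s * ((a + b) / 2 - t)) by ring.
    rewrite Rabs_mult, (Rabs_pos_eq s) by lra.
    assert (Rabs ((a + b) / 2 - t) <= (b - a) / 2) by (unfold Rabs; destruct Rcase_abs; lra).
    assert (s * (b - a) <= del).
    { apply Rle_trans with (del / (b - a) * (b - a)); [apply Rmult_le_compat_r; lra|].
      right; field; lra. }
    nra. }
  specialize (Hd y ltac:(lra) Hyt).
  rewrite Hgy, Rminus_0_l, Rabs_Ropp in Hd. lra.
Qed.

Lemma MVT_is_derive (f df : R -> R) u v : u < v ->
  (forall c, u < c < v -> is_derive f c (df c)) ->
  (forall c, u <= c <= v -> continuity_pt f c) ->
  exists c, u < c < v /\ f v - f u = df c * (v - u).
Proof.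
  intros Huv Hd Hc.
  set (pr := fun c (P : u < c < v) =>
    exist (fun l => derivable_pt_abs f c l) (df c) (proj1 (is_derive_Reals _ _ _) (Hd c P))).
  destruct (MVT f id u v pr (fun c _ => derivable_pt_id c) Huv Hc
              (fun c _ => derivable_continuous_pt _ _ (derivable_pt_id c))) as [c [P E]].
  exists c; split; [exact P|].
  simpl in E. rewrite derive_pt_id in E. unfold id in E. lra.
Qed.

Lemma is_derive_interior_max (f : R -> R) a b c l : is_derive f c l -> a < c < b ->
  (forall x, a < x < b -> f x <= f c) -> l = 0.
Proof.
  intros Hd Hc Hmax.
  exact (deriv_maximum f a b c
    (exist _ l (proj1 (is_derive_Reals _ _ _) Hd)) ltac:(lra) ltac:(lra)
    (fun x h1 h2 => Hmax x (conj h1 h2))).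
Qed.

Lemma is_derive_nonneg_nondecreasing (K K' : R -> R) a b :
  (forall t, a < t < b -> is_derive K t (K' t)) ->
  (forall t, a < t < b -> 0 <= K' t) ->
  forall s t, a < s <= t -> t < b -> K s <= K t.
Proof.
  intros HK HK' s t Hs Ht.
  destruct (Req_dec s t) as [->|Hne]; [lra|].
  destruct (MVT_is_derive K K' s t ltac:(lra)) as [c [Hc E]].
  - intros c Hc; apply HK; lra.
  - intros c Hc.
    apply continuity_pt_filterlim, (ex_derive_continuous (K:=R_AbsRing) (V:=R_NormedModule)).
    exists (K' c); apply HK; lra.
  - pose proof (HK' c ltac:(lra)). nra.
Qed.

Lemma is_derive_vanishing (K : R -> R) a b x l :
  a < x < b -> is_derive K x l -> (forall t, a < t < b -> K t = 0) -> l = 0.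
Proof.
  intros Hx HK HK0.
  assert (H0 : is_derive (fun _ => 0) x l).
  { apply (is_derive_ext_loc K); [|exact HK].
    apply (filter_imp (fun y => a < y < b)); [|exact (locally_open_interval a b x Hx)].
    intros y Hy; exact (HK0 y Hy). }
  rewrite <- (is_derive_unique _ _ _ H0). apply Derive_const.
Qed.

Section Valley.

Variables (a b : R) (z E K : R -> R).
Hypotheses
  (z_cont : forall t, a <= t <= b -> continuity_pt z t)
  (z_derive : forall t, a < t < b -> is_derive z t (E t * K t))
  (E_pos : forall t, a < t < b -> 0 < E t)
  (K_nondecreasing : forall s t, a < s <= t -> t < b -> K s <= K t)
  (z_a : z a = 0) (z_b : z b = 0).

Lemma valley_increment u v : a <= u < v -> v <= b ->
  exists c, u < c < v /\ z v - z u = E c * K c * (v - u).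
Proof.
  intros Hu Hv.
  apply MVT_is_derive; [lra| |].
  - intros c Hc; apply z_derive; lra.
  - intros c Hc; apply z_cont; lra.
Qed.

Lemma valley_nonincreasing u v : a <= u < v -> v <= b ->
  (forall c, u < c < v -> K c <= 0) -> z v <= z u.
Proof.
  intros Hu Hv HK.
  destruct (valley_increment u v Hu Hv) as [c [Hc E_c]].
  pose proof (E_pos c ltac:(lra)). pose proof (HK c Hc).
  assert (E c * K c <= 0) by nra. nra.
Qed.

Lemma valley_nondecreasing u v : a <= u < v -> v <= b ->
  (forall c, u < c < v -> 0 <= K c) -> z u <= z v.
Proof.
  intros Hu Hv HK.
  destruct (valley_increment u v Hu Hv) as [c [Hc E_c]].
  pose proof (E_pos c ltac:(lra)). pose proof (HK c Hc).
  assert (0 <= E c * K c) by nra. nra.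
Qed.

(* [z] decreases while [K <= 0] and increases once [K >= 0]; [K] changes sign at most once. *)
Lemma valley_nonpos t : a < t < b -> z t <= 0.
Proof.
  intros Ht. destruct (Rle_dec (K t) 0) as [HKt|HKt].
  - rewrite <- z_a. apply valley_nonincreasing; try lra.
    intros c Hc. apply Rle_trans with (K t); [apply K_nondecreasing|]; lra.
  - rewrite <- z_b. apply valley_nondecreasing; try lra.
    intros c Hc. apply Rle_trans with (K t); [lra|apply K_nondecreasing]; lra.
Qed.

Lemma valley_zero_K_zero t : a < t < b -> z t = 0 -> K t = 0.
Proof.
  intros Ht Hzt.
  assert (Hmax : E t * K t = 0).
  { apply (is_derive_interior_max z a b t (E t * K t) (z_derive t Ht) Ht).
    intros x Hx. rewrite Hzt. exact (valley_nonpos x Hx). }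
  pose proof (E_pos t Ht).
  destruct (Rmult_integral _ _ Hmax); lra.
Qed.

Lemma valley_zero_everywhere x0 : a < x0 < b -> z x0 = 0 ->
  forall t, a < t < b -> z t = 0.
Proof.
  intros Hx0 Hz0 t Ht.
  pose proof (valley_zero_K_zero x0 Hx0 Hz0) as HK0.
  pose proof (valley_nonpos t Ht).
  destruct (Rtotal_order t x0) as [Hlt|[->|Hgt]]; [|exact Hz0|].
  - assert (z x0 <= z t); [|lra].
    apply valley_nonincreasing; try lra.
    intros c Hc. rewrite <- HK0. apply K_nondecreasing; lra.
  - assert (z x0 <= z t); [|lra].
    apply valley_nondecreasing; try lra.
    intros c Hc. rewrite <- HK0. apply K_nondecreasing; lra.
Qed.

Lemma valley_neg : ~ (forall t, a < t < b -> K t = 0) ->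
  forall t, a < t < b -> z t < 0.
Proof.
  intros HK t Ht.
  destruct (Rlt_dec (z t) 0) as [Hneg|Hnneg]; [exact Hneg|exfalso].
  pose proof (valley_nonpos t Ht).
  apply HK. intros s Hs.
  apply valley_zero_K_zero; [exact Hs|].
  apply (valley_zero_everywhere t); [exact Ht|lra|exact Hs].
Qed.

End Valley.

Definition flux_ratio (d alpha : R) (Phi Phi' : R -> R) (t : R) : R :=
  (d * Phi' t - alpha * Phi t) / Phi t.

(* [exp (- alpha t / d) (Phi w' - Phi' w)] for the flux [w = d Phi' - alpha Phi], with [w']
   replaced by [- (p + lam) Phi] from the equation, so that no second derivative appears. *)
Definition flux_wronskian (d alpha lam : R) (p Phi Phi' : R -> R) (t : R) : R :=
  exp (- (alpha / d) * t) *
    (- (p t + lam) * Phi t ^ 2 - d * Phi' t ^ 2 + alpha * Phi t * Phi' t).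

Section FluxDerivatives.

Variables (d alpha lam : R) (p p' Phi Phi' Phi'' : R -> R) (t : R).
Hypotheses
  (d_neq0 : d <> 0)
  (Phi_derive : is_derive Phi t (Phi' t))
  (Phi'_derive : is_derive Phi' t (Phi'' t))
  (equation_at : d * Phi'' t - alpha * Phi' t + (p t + lam) * Phi t = 0).

Lemma flux_ratio_derive : Phi t <> 0 ->
  is_derive (flux_ratio d alpha Phi Phi') t
    (exp (alpha / d * t) / Phi t ^ 2 * flux_wronskian d alpha lam p Phi Phi' t).
Proof.
  intros HPhi. unfold flux_ratio, flux_wronskian.
  auto_derive.
  - repeat split; try (eexists; eauto); exact HPhi.
  - replace (Derive (fun x => Phi x) t) with (Phi' t)
      by (symmetry; apply is_derive_unique, Phi_derive).
    replace (Derive (fun x => Phi' x) t) with (Phi'' t)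
      by (symmetry; apply is_derive_unique, Phi'_derive).
    replace (Phi'' t) with ((alpha * Phi' t - (p t + lam) * Phi t) / d)
      by (field_simplify_eq; [lra|exact d_neq0]).
    replace (exp (- (alpha / d) * t)) with (/ exp (alpha / d * t))
      by (rewrite <- exp_Ropp; f_equal; ring).
    pose proof (exp_pos (alpha / d * t)).
    field; repeat split; lra.
Qed.

Lemma flux_wronskian_derive : is_derive p t (p' t) ->
  is_derive (flux_wronskian d alpha lam p Phi Phi') t
    (- exp (- (alpha / d) * t) * p' t * Phi t ^ 2).
Proof.
  intros Hp. unfold flux_wronskian.
  auto_derive.
  - repeat split; eexists; eauto.
  - replace (Derive (fun x => Phi x) t) with (Phi' t)
      by (symmetry; apply is_derive_unique, Phi_derive).
    replace (Derive (fun x => Phi' x) t) with (Phi'' t)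
      by (symmetry; apply is_derive_unique, Phi'_derive).
    replace (Derive (fun x => p x) t) with (p' t)
      by (symmetry; apply is_derive_unique, Hp).
    replace (Phi'' t) with ((alpha * Phi' t - (p t + lam) * Phi t) / d)
      by (field_simplify_eq; [lra|exact d_neq0]).
    field; exact d_neq0.
Qed.

End FluxDerivatives.

Section EigenfunctionFlux.

Variables (a b d alpha lam : R) (p p' Phi Phi' Phi'' : R -> R).
Hypotheses
  (a_lt_b : a < b) (d_neq0 : d <> 0)
  (p_deriv : deriv_on a b p p') (p'_cont : cont_on a b p')
  (Phi_deriv : deriv_on a b Phi Phi') (Phi'_deriv : deriv_on a b Phi' Phi'')
  (equation : forall x, a < x < b ->
     d * Phi'' x - alpha * Phi' x + (p x + lam) * Phi x = 0)
  (flux_a : d * Phi' a - alpha * Phi a = 0)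
  (flux_b : d * Phi' b - alpha * Phi b = 0)
  (Phi_pos : forall x, a <= x <= b -> 0 < Phi x).

Lemma flux_ratio_clamp_continuous t :
  continuity_pt (fun y => flux_ratio d alpha Phi Phi' (clamp a b y)) t.
Proof.
  assert (HPhi := continuity_pt_clamp a b Phi t ltac:(lra) (deriv_on_cont_on _ _ _ _ Phi_deriv)).
  assert (HPhi' := continuity_pt_clamp a b Phi' t ltac:(lra) (deriv_on_cont_on _ _ _ _ Phi'_deriv)).
  unfold flux_ratio.
  apply (continuity_pt_div (fun y => d * Phi' (clamp a b y) - alpha * Phi (clamp a b y))
                           (fun y => Phi (clamp a b y))); [|exact HPhi|].
  - apply (continuity_pt_minus (fun y => d * Phi' (clamp a b y))
                               (fun y => alpha * Phi (clamp a b y)));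
      apply continuity_pt_scal; assumption.
  - pose proof (Phi_pos _ (clamp_in a b t ltac:(lra))). lra.
Qed.

Lemma interior_derivatives y : a < y < b ->
  is_derive Phi y (Phi' y) /\ is_derive Phi' y (Phi'' y) /\ is_derive p y (p' y).
Proof. intros Hy. repeat split; eapply deriv_on_is_derive; eassumption. Qed.

Lemma scaled_flux_ratio_derive s t : a < t < b ->
  is_derive (fun y => s * flux_ratio d alpha Phi Phi' (clamp a b y)) t
    (exp (alpha / d * t) / Phi t ^ 2 * (s * flux_wronskian d alpha lam p Phi Phi' t)).
Proof.
  intros Ht. destruct (interior_derivatives t Ht) as [HPhi [HPhi' _]].
  replace (exp (alpha / d * t) / Phi t ^ 2 * (s * flux_wronskian d alpha lam p Phi Phi' t))
    with (s * (exp (alpha / d * t) / Phi t ^ 2 * flux_wronskian d alpha lam p Phi Phi' t))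
    by ring.
  apply is_derive_scal, (is_derive_clamp a b (flux_ratio d alpha Phi Phi') t _ Ht).
  apply (flux_ratio_derive d alpha lam p Phi Phi' Phi'' t d_neq0 HPhi HPhi' (equation t Ht)).
  pose proof (Phi_pos t ltac:(lra)). lra.
Qed.

Lemma scaled_flux_wronskian_derive s t : a < t < b ->
  is_derive (fun y => s * flux_wronskian d alpha lam p Phi Phi' y) t
    (s * (- exp (- (alpha / d) * t) * p' t * Phi t ^ 2)).
Proof.
  intros Ht. destruct (interior_derivatives t Ht) as [HPhi [HPhi' Hp]].
  apply is_derive_scal.
  exact (flux_wronskian_derive d alpha lam p p' Phi Phi' Phi'' t d_neq0 HPhi HPhi'
           (equation t Ht) Hp).
Qed.

Lemma scaled_flux_wronskian_nondecreasing s :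
  (forall x, a <= x <= b -> s * p' x <= 0) ->
  forall u v, a < u <= v -> v < b ->
  s * flux_wronskian d alpha lam p Phi Phi' u <= s * flux_wronskian d alpha lam p Phi Phi' v.
Proof.
  intros Hsign.
  apply (is_derive_nonneg_nondecreasing _ _ a b (scaled_flux_wronskian_derive s)).
  intros t Ht. pose proof (exp_pos (- (alpha / d) * t)). pose proof (Hsign t ltac:(lra)).
  replace (s * (- exp (- (alpha / d) * t) * p' t * Phi t ^ 2))
    with (exp (- (alpha / d) * t) * (- (s * p' t)) * Phi t ^ 2) by ring.
  apply Rmult_le_pos; [apply Rmult_le_pos|apply pow2_ge_0]; lra.
Qed.

Lemma scaled_flux_wronskian_nonvanishing s : s <> 0 ->
  (exists x, a <= x <= b /\ p' x <> 0) ->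
  ~ (forall t, a < t < b -> s * flux_wronskian d alpha lam p Phi Phi' t = 0).
Proof.
  intros Hs Hnz HW0.
  destruct (cont_on_nonzero_interior a b p' a_lt_b p'_cont Hnz) as [x1 [Hx1 Hp'x1]].
  assert (Hzero := is_derive_vanishing _ a b x1 _ Hx1
                     (scaled_flux_wronskian_derive s x1 Hx1) HW0).
  pose proof (exp_pos (- (alpha / d) * x1)). pose proof (Phi_pos x1 ltac:(lra)).
  apply Hp'x1, (Rmult_eq_reg_l (- s * exp (- (alpha / d) * x1) * Phi x1 ^ 2)).
  - rewrite Rmult_0_r, <- Hzero. ring.
  - repeat apply Rmult_integral_contrapositive_currified; try apply pow_nonzero; lra.
Qed.

Lemma scaled_flux_neg (s : R) : s <> 0 ->
  (forall x, a <= x <= b -> s * p' x <= 0) ->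
  (exists x, a <= x <= b /\ p' x <> 0) ->
  forall x, a < x < b -> s * (d * Phi' x - alpha * Phi x) < 0.
Proof.
  intros Hs Hsign Hnz x Hx.
  assert (Hneg : s * flux_ratio d alpha Phi Phi' (clamp a b x) < 0).
  { apply (valley_neg a b (fun y => s * flux_ratio d alpha Phi Phi' (clamp a b y))
             (fun y => exp (alpha / d * y) / Phi y ^ 2)
             (fun y => s * flux_wronskian d alpha lam p Phi Phi' y)); [| | | | | | |exact Hx].
    - intros t _. apply continuity_pt_scal, flux_ratio_clamp_continuous.
    - exact (scaled_flux_ratio_derive s).
    - intros t Ht. pose proof (exp_pos (alpha / d * t)). pose proof (Phi_pos t ltac:(lra)).
      apply Rdiv_lt_0_compat; [lra|nra].
    - exact (scaled_flux_wronskian_nondecreasing s Hsign).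
    - unfold flux_ratio. rewrite clamp_id, flux_a by lra. unfold Rdiv. ring.
    - unfold flux_ratio. rewrite clamp_id, flux_b by lra. unfold Rdiv. ring.
    - exact (scaled_flux_wronskian_nonvanishing s Hs Hnz). }
  rewrite clamp_id in Hneg by lra. unfold flux_ratio in Hneg.
  pose proof (Phi_pos x ltac:(lra)).
  replace (s * (d * Phi' x - alpha * Phi x))
    with (s * ((d * Phi' x - alpha * Phi x) / Phi x) * Phi x) by (field; lra).
  nra.
Qed.

End EigenfunctionFlux.

Theorem lemma5p1 (a b d alpha : R) (p p' : R -> R) (lam1 : R) (Phi1 : R -> R) :
  a < b -> 0 < d -> C1_on a b p p' ->
  principal_eigenpair d alpha p a b lam1 Phi1 ->
  ((forall x, a <= x <= b -> p' x <= 0) ->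
   (exists x, a <= x <= b /\ p' x <> 0) ->
   forall x, a < x < b -> d * Derive Phi1 x < alpha * Phi1 x) /\
  ((forall x, a <= x <= b -> 0 <= p' x) ->
   (exists x, a <= x <= b /\ p' x <> 0) ->
   forall x, a < x < b -> d * Derive Phi1 x > alpha * Phi1 x).
Proof.
  intros Hab Hd [Hp Hp'] [[Phi' [Phi'' [HPhi [HPhi' [_ [Heq [Ha [Hb _]]]]]]]] [_ Hpos]].
  assert (Hflux := scaled_flux_neg a b d alpha lam1 p p' Phi1 Phi' Phi''
                     Hab ltac:(lra) Hp Hp' HPhi HPhi' Heq Ha Hb Hpos).
  split; intros Hsign Hnz x Hx;
    rewrite (is_derive_unique _ _ _ (deriv_on_is_derive _ _ _ _ _ HPhi Hx)).
  - assert (H := Hflux 1 ltac:(lra) ltac:(intros y Hy; specialize (Hsign y Hy); lra) Hnz x Hx).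
    lra.
  - assert (H := Hflux (-1) ltac:(lra) ltac:(intros y Hy; specialize (Hsign y Hy); lra) Hnz x Hx).
    lra.
Qed.
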